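(* Let $(V,Y_V)$ be a vertex algebra, $(M,Y_M)$ a $V$-module equipped with an operator $d$ satisfying $[d,Y_M(v,z)]=\frac{d}{dz}Y_M(v,z)$, and let $\overline V=V\oplus M$ be the vertex algebra with $$Y(v_1+m_1,z)(v_2+m_2)=Y_V(v_1,z)v_2+Y_M(v_1,z)m_2+e^{zd}Y_M(v_2,-z)m_1 .$$ Let $M_2,M_3$ be $V$-modules and let $\mathcal Y(\cdot,z)$ be an intertwining operator of type $\binom{M_3}{M\ \ M_2}$ (compatible with $d$, i.e. $\mathcal Y(dm,z)=\frac{d}{dz}\mathcal Y(m,z)$) involving only integral powers of $z$, i.e. $\mathcal Y(m,z)m_2\in M_3((z))$. Then $$Y_{M_2\oplus M_3}(v+m,z)(m_2+m_3)=Y(v,z)(m_2+m_3)+\mathcal Y(m,z)m_2\qquad(v\in V,\ m\in M,\ m_i\in M_i)$$ defines a $\overline V$-module structure on $M_2\oplus M_3$.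
   Context: Here $Y(v,z)$ on $M_2\oplus M_3$ denotes the direct sum of the module vertex operators of $M_2$ and $M_3$. In the module structure the elements of $M$ act on $M_2$ via $\mathcal Y$ and act by zero on $M_3$. *)

From HB Require Import structures.
From mathcomp Require Import all_boot all_order all_algebra.
From Stdlib Require Import ClassicalEpsilon.
Set Implicit Arguments. Unset Strict Implicit. Unset Printing Implicit Defensive.
Import Order.TTheory GRing.Theory Num.Theory.
Local Open Scope ring_scope.

(* A "mode map" Y : A -> int -> B -> C encodes Y(a,z)b = \sum_n (Y a n b) z^{-n-1}. *)

(* Sum of a finitely supported family: the eventual value of partial sums
   (unspecified if the partial sums do not stabilize). *)
Definition fsum (W : zmodType) (f : nat -> W) : W :=
  epsilon (inhabits 0)
    (fun s => exists K : nat, forall K' : nat, (K <= K')%N ->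
       \sum_(i < K') f i = s).

Definition binz (F : fieldType) (m : int) (i : nat) : F :=
  (\prod_(j < i) (m%:~R - (j : nat)%:R)) / (i`!)%:R.

Section Defs.
Variable F : fieldType.

Definition bilinear_modes (A B C : lmodType F) (Y : A -> int -> B -> C) :=
  (forall (a : F) u v n w, Y (a *: u + v) n w = a *: Y u n w + Y v n w) /\
  (forall (a : F) u n w w', Y u n (a *: w + w') = a *: Y u n w + Y u n w').

Definition truncation (A B C : lmodType F) (Y : A -> int -> B -> C) :=
  forall a b, exists N : int, forall n : int, N <= n -> Y a n b = 0.

(* Jacobi identity in component form (Borcherds identity):
   \sum_i binom(m,i) (u_{r+i} v)_{m+n-i} w
     = \sum_i (-1)^i binom(r,i) ( u_{m+r-i} v_{n+i} w
                                   - (-1)^r v_{n+r-i} u_{m+i} w ). *)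
Definition jacobi (A B B' W W3 : lmodType F)
  (Yin : A -> int -> B -> B') (Yout : B' -> int -> W -> W3)
  (YA3 : A -> int -> W3 -> W3) (YB : B -> int -> W -> W3)
  (YA2 : A -> int -> W -> W) :=
  forall u v w (m n r : int),
    fsum (fun i => binz F m i *: Yout (Yin u (r + i%:Z) v) (m + n - i%:Z) w)
    = fsum (fun i => ((-1) ^+ i * binz F r i) *:
        (YA3 u (m + r - i%:Z) (YB v (n + i%:Z) w)
         - ((-1) ^ r) *: YB v (n + r - i%:Z) (YA2 u (m + i%:Z) w))).

Definition is_vertex_algebra (V : lmodType F) (Y : V -> int -> V -> V)
  (one : V) :=
  bilinear_modes Y /\ truncation Y /\
  (forall n v, Y one n v = if n == -1 then v else 0) /\
  (forall v (n : int), 0 <= n -> Y v n one = 0) /\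
  (forall v, Y v (-1) one = v) /\
  jacobi Y Y Y Y Y.

Definition is_module (V : lmodType F) (YV : V -> int -> V -> V) (one : V)
  (W : lmodType F) (YW : V -> int -> W -> W) :=
  [/\ bilinear_modes YW, truncation YW,
      (forall n w, YW one n w = if n == -1 then w else 0) &
      jacobi YV YW YW YW YW].

(* [d, Y_M(v,z)] = d/dz Y_M(v,z), in modes: d(v_n m) - v_n(d m) = -n v_{n-1} m *)
Definition d_compatible (V M : lmodType F) (YM : V -> int -> M -> M)
  (d : M -> M) :=
  forall v n m, d (YM v n m) - YM v n (d m) = - (n%:~R : F) *: YM v (n - 1) m.

(* Intertwining operator of type (M3 / M M2) with integral powers of z:
   I : M -> int -> M2 -> M3, I(m,z)m2 = \sum_n (I m n m2) z^{-n-1} in M3((z)). *)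
Definition is_intertwining (V M M2 M3 : lmodType F)
  (YM : V -> int -> M -> M) (Y2 : V -> int -> M2 -> M2)
  (Y3 : V -> int -> M3 -> M3) (I : M -> int -> M2 -> M3) :=
  [/\ bilinear_modes I, truncation I & jacobi YM I Y3 I Y2].

(* I(dm,z) = d/dz I(m,z): (dm)_n = -n m_{n-1} *)
Definition intertwining_d (M M2 M3 : lmodType F) (I : M -> int -> M2 -> M3)
  (d : M -> M) :=
  forall m n m2, I (d m) n m2 = - (n%:~R : F) *: I m (n - 1) m2.

(* The vertex operator of Vbar = V (+) M:
   Y(v1+m1,z)(v2+m2) = Y_V(v1,z)v2 + Y_M(v1,z)m2 + e^{zd} Y_M(v2,-z) m1,
   whose p-th mode has M-component
   v1_p m2 + \sum_k (-1)^{p+k+1}/k! d^k (v2_{p+k} m1). *)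
Definition Ybar (V M : lmodType F) (YV : V -> int -> V -> V)
  (YM : V -> int -> M -> M) (d : M -> M) (a : V * M) (p : int) (b : V * M)
  : V * M :=
  (YV a.1 p b.1,
   YM a.1 p b.2 +
   fsum (fun k : nat => ((-1) ^ (p + k%:Z + 1) / (k`!)%:R) *:
                         iter k d (YM b.1 (p + k%:Z) a.2))).

Definition Ysum (V M M2 M3 : lmodType F) (Y2 : V -> int -> M2 -> M2)
  (Y3 : V -> int -> M3 -> M3) (I : M -> int -> M2 -> M3)
  (a : V * M) (p : int) (x : M2 * M3) : M2 * M3 :=
  (Y2 a.1 p x.1, Y3 a.1 p x.2 + I a.2 p x.1).

End Defs.

(* Bilinearity, truncation and the vacuum axiom are inherited componentwise.
   For the Jacobi identity, the M2-component is that of M2; the M3-component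
   splits into the Jacobi identities of M3 and of I, plus a skew contribution
   coming from e^{zd}.  Expanding I(d^k m, z) as a derivative and resumming with
     \sum_i (-1)^i C(m,i) C(m+n-i, j-i) = C(n,j)        (m, n integers)
   turns the skew contribution into the Jacobi identity of I with its two
   inputs exchanged (lemma [skew_sum]). *)

From HB Require Import structures.
From mathcomp Require Import all_boot all_order all_algebra.
From Stdlib Require Import ClassicalEpsilon FunctionalExtensionality.
From mathcomp Require Import ring.
Set Implicit Arguments. Unset Strict Implicit.
Import Order.TTheory GRing.Theory Num.Theory.
Local Open Scope ring_scope.

(* [f] vanishes from some index on, so that [fsum f] is an honest finite sum. *)
Definition fin_support (W : zmodType) (f : nat -> W) :=
  exists N : nat, forall i, (N <= i)%N -> f i = 0.

Section FiniteSums.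
Variable W : zmodType.
Implicit Types f g : nat -> W.

Lemma sum_ord_vanishing f (N K : nat) :
  (forall i, (N <= i)%N -> f i = 0) -> (N <= K)%N ->
  \sum_(i < K) f i = \sum_(i < N) f i.
Proof.
move=> f0 leNK; rewrite -!(big_mkord xpredT) (big_cat_nat (leq0n N) leNK) /=.
rewrite [X in _ + X]big_nat_cond [X in _ + X]big1 ?addr0 //.
by move=> i /andP[/andP[leNi _] _]; apply: f0.
Qed.

Lemma fsum_fin f (N : nat) :
  (forall i, (N <= i)%N -> f i = 0) -> fsum f = \sum_(i < N) f i.
Proof.
move=> f0; rewrite /fsum; set P := (fun s => _).
have [K sumK] : P (epsilon (inhabits 0) P).
  apply: epsilon_spec; exists (\sum_(i < N) f i); exists N => K' leNK'.
  exact: sum_ord_vanishing.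
rewrite -(sumK (maxn K N)) ?leq_maxl //.
by apply: sum_ord_vanishing => //; rewrite leq_maxr.
Qed.

Lemma eq_fsum f g : f =1 g -> fsum f = fsum g.
Proof. by move=> fg; congr fsum; apply: functional_extensionality. Qed.

Lemma fsum_eq0 f : f =1 (fun=> 0) -> fsum f = 0.
Proof. by move=> f0; rewrite (fsum_fin (N := 0)) ?big_ord0. Qed.

Lemma fin_supportD f g :
  fin_support f -> fin_support g -> fin_support (fun i => f i + g i).
Proof.
move=> [Nf f0] [Ng g0]; exists (maxn Nf Ng) => i; rewrite geq_max => /andP[lef leg].
by rewrite f0 // g0 // addr0.
Qed.

Lemma fsumD f g : fin_support f -> fin_support g ->
  fsum (fun i => f i + g i) = fsum f + fsum g.
Proof.
move=> [Nf f0] [Ng g0]; set N := maxn Nf Ng.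
have f0' i : (N <= i)%N -> f i = 0 by rewrite geq_max => /andP[+ _]; apply: f0.
have g0' i : (N <= i)%N -> g i = 0 by rewrite geq_max => /andP[_]; apply: g0.
rewrite (fsum_fin f0') (fsum_fin g0') (fsum_fin (N := N)) ?big_split //.
by move=> i leNi; rewrite f0' // g0' // addr0.
Qed.

End FiniteSums.

Lemma fin_supportZ (F : fieldType) (W : lmodType F) (c : F) (f : nat -> W) :
  fin_support f -> fin_support (fun i => c *: f i).
Proof. by move=> [N f0]; exists N => i leNi; rewrite f0 // scaler0. Qed.

Lemma fsumZ (F : fieldType) (W : lmodType F) (c : F) (f : nat -> W) :
  fin_support f -> fsum (fun i => c *: f i) = c *: fsum f.
Proof.
move=> [N f0]; rewrite (fsum_fin f0) scaler_sumr (fsum_fin (N := N)) //.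
by move=> i leNi; rewrite f0 // scaler0.
Qed.

Lemma fsum_pair (A B : zmodType) (f : nat -> A * B) : fin_support f ->
  fsum f = (fsum (fun i => (f i).1), fsum (fun i => (f i).2)).
Proof.
move=> [N f0]; rewrite !(fsum_fin (N := N)) => [|i /f0 -> //|i /f0 -> //|//].
by rewrite [LHS]surjective_pairing (big_morph fst (id1 := 0) (op1 := +%R))
  ?(big_morph snd (id1 := 0) (op1 := +%R)).
Qed.

Section BilinearModes.
Variables (F : fieldType) (A B C : lmodType F) (Y : A -> int -> B -> C).
Hypothesis Ybil : bilinear_modes Y.

Lemma modesD1 u v n w : Y (u + v) n w = Y u n w + Y v n w.
Proof. by case: Ybil => YD1 _; rewrite -[u]scale1r YD1 !scale1r. Qed.

Lemma modes01 n w : Y 0 n w = 0.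
Proof. by apply: (addrI (Y 0 n w)); rewrite -modesD1 !addr0. Qed.

Lemma modesZ1 a u n w : Y (a *: u) n w = a *: Y u n w.
Proof. by case: Ybil => YD1 _; rewrite -[a *: u]addr0 YD1 modes01 addr0. Qed.

Lemma modesD2 u n w w' : Y u n (w + w') = Y u n w + Y u n w'.
Proof. by case: Ybil => _ YD2; rewrite -[w]scale1r YD2 !scale1r. Qed.

Lemma modes02 u n : Y u n 0 = 0.
Proof. by apply: (addrI (Y u n 0)); rewrite -modesD2 !addr0. Qed.

Lemma modes_fsum1 (f : nat -> A) n w : fin_support f ->
  Y (fsum f) n w = fsum (fun k => Y (f k) n w).
Proof.
move=> [N f0]; rewrite (fsum_fin f0) (fsum_fin (N := N)); last first.
  by move=> k leNk; rewrite f0 // modes01.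
by apply: (big_morph (fun u => Y u n w)); [move=> x y; exact: modesD1 | exact: modes01].
Qed.

End BilinearModes.

Lemma truncation_from (F : fieldType) (A B C : lmodType F)
  (Y : A -> int -> B -> C) : truncation Y ->
  forall a b (c : int), exists N : nat,
  forall i : nat, (N <= i)%N -> Y a (c + i%:Z) b = 0.
Proof.
move=> Ytr a b c; have [K YK] := Ytr a b.
exists `|K - c|%N => i leNi; apply: YK.
by rewrite -lerBlDl (le_trans (lez_abs _)) // lez_nat.
Qed.

Section JacobiTerms.
Variables (F : fieldType) (A B B' W W3 : lmodType F).
Variables (Yin : A -> int -> B -> B') (Yout : B' -> int -> W -> W3).
Variables (YA3 : A -> int -> W3 -> W3) (YB : B -> int -> W -> W3).
Variable (YA2 : A -> int -> W -> W).

Definition jacobi_lhs u v w (m n r : int) (i : nat) : W3 :=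
  binz F m i *: Yout (Yin u (r + i%:Z) v) (m + n - i%:Z) w.

Definition jacobi_rhs u v w (m n r : int) (i : nat) : W3 :=
  ((-1) ^+ i * binz F r i) *:
    (YA3 u (m + r - i%:Z) (YB v (n + i%:Z) w)
     - ((-1) ^ r) *: YB v (n + r - i%:Z) (YA2 u (m + i%:Z) w)).

Lemma jacobiP : jacobi Yin Yout YA3 YB YA2 <->
  forall u v w m n r, fsum (jacobi_lhs u v w m n r) = fsum (jacobi_rhs u v w m n r).
Proof. by []. Qed.

Lemma jacobi_lhs_supp u v w m n r : truncation Yin -> bilinear_modes Yout ->
  fin_support (jacobi_lhs u v w m n r).
Proof.
move=> Yin_tr Yout_bil; have [N YN] := truncation_from Yin_tr u v r.
by exists N => i /YN; rewrite /jacobi_lhs => ->; rewrite modes01 // scaler0.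
Qed.

Lemma jacobi_rhs_supp u v w m n r :
  truncation YB -> truncation YA2 -> bilinear_modes YA3 -> bilinear_modes YB ->
  fin_support (jacobi_rhs u v w m n r).
Proof.
move=> YB_tr YA2_tr YA3_bil YB_bil.
have [N1 YN1] := truncation_from YB_tr v w n.
have [N2 YN2] := truncation_from YA2_tr u w m.
exists (maxn N1 N2) => i; rewrite geq_max => /andP[/YN1 YBi /YN2 YA2i].
by rewrite /jacobi_rhs YBi YA2i !modes02 // scaler0 subr0 scaler0.
Qed.

End JacobiTerms.

Section Binomial.
Variable F : fieldType.
Hypothesis F_char0 : [pchar F] =i pred0.

Definition binf (x : F) (i : nat) : F :=
  (\prod_(j < i) (x - (j : nat)%:R)) / (i`!)%:R.

Lemma binzE (m : int) i : binz F m i = binf m%:~R i.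
Proof. by []. Qed.

Lemma binf0 x : binf x 0 = 1.
Proof. by rewrite /binf big_ord0 fact0 divr1. Qed.

Lemma binf_at0 i : binf 0 i.+1 = 0.
Proof. by rewrite /binf big_ord_recl /= subr0 !mul0r. Qed.

Lemma natf_neq0 n : (0 < n)%N -> n%:R != 0 :> F.
Proof. by move=> n_gt0; rewrite ((pcharf0P F).1 F_char0) -lt0n. Qed.

Lemma binf_pascal x k : binf x k.+1 = binf (x - 1) k.+1 + binf (x - 1) k.
Proof.
rewrite /binf big_ord_recl big_ord_recr /=.
have -> : \prod_(i < k) (x - (lift ord0 i : nat)%:R)
          = \prod_(i < k) (x - 1 - (i : nat)%:R).
  by apply: eq_bigr => i _; rewrite /= /bump /= natrD opprD addrA.
rewrite factS natrM.
have fact_neq0 := natf_neq0 (fact_gt0 k).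
have Sk_neq0 := natf_neq0 (ltn0Sn k).
rewrite -addn1 natrD in Sk_neq0 *.
by field; rewrite fact_neq0 Sk_neq0.
Qed.

Definition alt_conv (x y : F) (j : nat) : F :=
  \sum_(i < j.+1) ((-1) ^+ i * binf x i * binf (x + y - (i : nat)%:R) (j - i)).

Lemma alt_conv0 x y : alt_conv x y 0 = 1.
Proof. by rewrite /alt_conv big_ord1 /= !binf0 mulr1 mul1r. Qed.

(* Pascal's rule, applied termwise, lowers [x] by one. *)
Lemma alt_conv_rec x y j :
  alt_conv x y j.+1 = alt_conv (x - 1) (y + 1) j.+1 - alt_conv (x - 1) y j.
Proof.
rewrite /alt_conv big_ord_recl [X in _ = X - _]big_ord_recl /= !binf0 !subr0.
rewrite !mulr1 (_ : x - 1 + (y + 1) = x + y); last by ring.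
rewrite -addrA; congr (_ + _).
rewrite -sumrN -big_split /=; apply: eq_bigr => i _.
rewrite /bump /= !add1n subSS binf_pascal -/(x - 1).
have -> : x + y - (i.+1)%:R = x - 1 + y - i%:R by rewrite -addn1 natrD; ring.
by rewrite exprS; ring.
Qed.

Lemma alt_conv_at0 y j : alt_conv 0 y j = binf y j.
Proof.
case: j => [|j]; first by rewrite alt_conv0 binf0.
rewrite /alt_conv big_ord_recl /= big1 ?addr0; last first.
  by move=> i _; rewrite binf_at0 mulr0 mul0r.
by rewrite expr0 binf0 !mul1r add0r subr0 subn0.
Qed.

Lemma alt_conv_up x : (forall y j, alt_conv (x - 1) y j = binf y j) ->
  forall y j, alt_conv x y j = binf y j.
Proof.
move=> IH y [|j]; first by rewrite alt_conv0 binf0.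
by rewrite alt_conv_rec !IH (binf_pascal (y + 1)) !addrK.
Qed.

Lemma alt_conv_down x : (forall y j, alt_conv x y j = binf y j) ->
  forall y j, alt_conv (x - 1) y j = binf y j.
Proof.
move=> IH y j; elim: j y => [|j IHj] y; first by rewrite alt_conv0 binf0.
have := alt_conv_rec x (y - 1) j; rewrite subrK => rec.
have -> : alt_conv (x - 1) y j.+1 = alt_conv x (y - 1) j.+1 + alt_conv (x - 1) (y - 1) j.
  by rewrite rec subrK.
by rewrite IH IHj -binf_pascal.
Qed.

Lemma alt_conv_int (m : int) y j : alt_conv m%:~R y j = binf y j.
Proof.
have pos k : forall y j, alt_conv k%:R y j = binf y j.
  elim: k => [|k IHk]; first exact: alt_conv_at0.
  by apply: alt_conv_up => y' j'; rewrite -addn1 natrD addrK.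
have neg k : forall y j, alt_conv (- k%:R) y j = binf y j.
  elim: k => [|k IHk]; first by rewrite oppr0; exact: alt_conv_at0.
  by rewrite -addn1 natrD opprD; exact: alt_conv_down.
by case: m => k; [exact: pos | exact: (neg k.+1)].
Qed.

Lemma binz_alt_vandermonde (m n : int) j :
  \sum_(i < j.+1) ((-1) ^+ i * binz F m i * binz F (m + n - (i : nat)%:Z) (j - i))
  = binz F n j.
Proof.
rewrite binzE -(alt_conv_int m (n%:~R) j); apply: eq_bigr => i _.
by rewrite !binzE rmorphB rmorphD.
Qed.

End Binomial.

Lemma sum_triangle (W : zmodType) N (g : nat -> nat -> W) :
  \sum_(i < N) \sum_(k < (N - i)%N) g i k
  = \sum_(j < N) \sum_(i < j.+1) g i (j - i)%N.
Proof.
elim: N => [|N IH]; first by rewrite !big_ord0.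
rewrite big_ord_recr [RHS]big_ord_recr /= -IH.
rewrite [X in _ = _ + X]big_ord_recr /= subnn subSnn big_ord1 addrA.
congr (_ + _); rewrite -big_split /=; apply: eq_bigr => i _.
by rewrite subSn ?big_ord_recr // ltnW.
Qed.

Lemma sum_square_diag (W : zmodType) N (g : nat -> nat -> W) :
  (forall i k, (N <= i + k)%N -> g i k = 0) ->
  \sum_(i < N) \sum_(k < N) g i k = \sum_(j < N) \sum_(i < j.+1) g i (j - i)%N.
Proof.
move=> g0; rewrite -sum_triangle; apply: eq_bigr => i _.
apply: sum_ord_vanishing; last by rewrite leq_subr.
by move=> k; rewrite leq_subLR => /g0.
Qed.

Lemma sign_split (F : fieldType) (p : int) (k : nat) :
  (-1 : F) ^ (p + k%:Z + 1) = (-1) ^ (p + 1) * (-1) ^+ k.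
Proof.
have sign_neq0 : (-1 : F) != 0 by rewrite oppr_eq0 oner_eq0.
by rewrite addrAC (expfzDr _ _ sign_neq0) exprnP.
Qed.

Lemma signz_sq (F : fieldType) (r : int) : (-1 : F) ^ r * (-1) ^ r = 1.
Proof. by rewrite -expfzMl mulrNN mulr1 exp1rz. Qed.

Lemma signzS (F : fieldType) (r : int) : (-1 : F) ^ (r + 1) = - (-1) ^ r.
Proof.
have sign_neq0 : (-1 : F) != 0 by rewrite oppr_eq0 oner_eq0.
by rewrite expfzDr // expr1z mulrN1.
Qed.

Section SkewTerm.
Variables (F : fieldType) (M M2 M3 : lmodType F).
Hypothesis F_char0 : [pchar F] =i pred0.
Variables (I : M -> int -> M2 -> M3) (d : {linear M -> M}).
Hypotheses (Ibil : bilinear_modes I) (Id : intertwining_d I d).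

Lemma iter_linear0 k : iter k d 0 = 0.
Proof. by elim: k => // k IH; rewrite iterS IH linear0. Qed.

(* I(d^k x, z) = (d/dz)^k I(x, z), in modes. *)
Lemma modes_iter_d k x q w : I (iter k d x) q w =
  ((-1) ^+ k * \prod_(j < k) (q%:~R - (j : nat)%:R)) *: I x (q - k%:Z) w.
Proof.
elim: k x q => [|k IH] x q; first by rewrite big_ord0 mulr1 scale1r subr0.
rewrite iterS Id IH scalerA big_ord_recl /= subr0.
have -> : \prod_(i < k) (q%:~R - (bump 0 i)%:R : F)
          = \prod_(i < k) ((q - 1)%:~R - (i : nat)%:R).
  by apply: eq_bigr => i _; rewrite /bump /= add1n -addn1 natrD rmorphB /=; ring.
have -> : q - 1 - k%:Z = q - (k.+1)%:Z by rewrite -addn1 PoszD; ring.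
by rewrite exprS; congr (_ *: _); ring.
Qed.

(* Taylor expansion: I(e^{zd} x(z), z_0) re-expands the modes of x. *)
Lemma modes_exp_d (h : int -> M) (s q : int) w :
  fin_support (fun k => h (s + k%:Z)) ->
  I (fsum (fun k => ((-1) ^ (s + k%:Z + 1) / (k`!)%:R) *: iter k d (h (s + k%:Z))))
    q w
  = (-1) ^ (s + 1) *: fsum (fun k => binz F q k *: I (h (s + k%:Z)) (q - k%:Z) w).
Proof.
move=> [N h0]; rewrite modes_fsum1 //; last first.
  by exists N => k /h0 ->; rewrite iter_linear0 scaler0.
rewrite -fsumZ; last by exists N => k /h0 ->; rewrite modes01 // scaler0.
apply: eq_fsum => k; rewrite modesZ1 // modes_iter_d !scalerA binzE /binf.
congr (_ *: _); rewrite sign_split; set P := \prod_(_ < k) _.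
transitivity ((-1) ^ (s + 1) * ((-1) ^+ k * ((-1) ^+ k * P)) / (k`!)%:R).
  by ring.
by rewrite signrMK mulrA.
Qed.

(* The skew term of the Jacobi identity of M2 (+) M3, for h(p) = Y_M(v, p) m:
   the i-th coefficient of \sum_i C(m,i) I(e^{zd} Y_M(v,-z) m)_{m+n-i} w. *)
Definition skew_term (h : int -> M) w (m n r : int) (i : nat) : M3 :=
  binz F m i *:
    I (fsum (fun k => ((-1) ^ (r + i%:Z + k%:Z + 1) / (k`!)%:R) *:
                      iter k d (h (r + i%:Z + k%:Z)))) (m + n - i%:Z) w.

Lemma skew_term_supp (h : int -> M) w m n r :
  fin_support (fun j => h (r + j%:Z)) -> fin_support (skew_term h w m n r).
Proof.
move=> [N h0]; exists N => i leNi; rewrite /skew_term fsum_eq0 ?modes01 ?scaler0 //.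
move=> k; rewrite -[r + _ + _]addrA -PoszD h0 ?iter_linear0 ?scaler0 //.
by rewrite (leq_trans leNi) ?leq_addr.
Qed.

(* Resummed with the alternating Vandermonde identity, the skew term is, up to
   the sign -(-1)^r, the left side of the Jacobi identity of I with its two
   inputs exchanged. *)
Lemma skew_sum (h : int -> M) w (m n r : int) :
  fin_support (fun j => h (r + j%:Z)) ->
  fsum (skew_term h w m n r)
  = (-1) ^ (r + 1) *: fsum (fun j => binz F n j *: I (h (r + j%:Z)) (n + m - j%:Z) w).
Proof.
move=> [N h0]; pose X j := I (h (r + j%:Z)) (n + m - j%:Z) w.
have X0 j : (N <= j)%N -> X j = 0 by move=> /h0; rewrite /X => ->; rewrite modes01.
have h0' i k : (N <= i + k)%N -> h (r + i%:Z + k%:Z) = 0.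
  by rewrite -addrA -PoszD; apply: h0.
have expand i : I (fsum (fun k => ((-1) ^ (r + i%:Z + k%:Z + 1) / (k`!)%:R) *:
                      iter k d (h (r + i%:Z + k%:Z)))) (m + n - i%:Z) w
    = (-1) ^ (r + 1) *: \sum_(k < N) ((-1) ^+ i * binz F (m + n - i%:Z) k) *: X (i + k)%N.
  rewrite modes_exp_d; last first.
    by exists N => k leNk; apply: h0'; rewrite (leq_trans leNk) ?leq_addl.
  rewrite (fsum_fin (N := N)); last first.
    by move=> k leNk; rewrite h0' ?modes01 ?scaler0 // (leq_trans leNk) ?leq_addl.
  rewrite sign_split -scalerA scaler_sumr; congr (_ *: _); apply: eq_bigr => k _.
  rewrite scalerA /X PoszD addrA; congr (_ *: I _ _ w); ring.
rewrite /skew_term (fsum_fin (N := N)); last first.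
  move=> i leNi; rewrite expand big1 ?scaler0 // => k _.
  by rewrite X0 ?scaler0 // (leq_trans leNi) ?leq_addr.
rewrite (fsum_fin (N := N)); last by move=> j /X0; rewrite /X => ->; rewrite scaler0.
under eq_bigr => i _ do rewrite expand scalerA mulrC -scalerA scaler_sumr.
rewrite -scaler_sumr; congr (_ *: _).
under eq_bigr => i _ do under eq_bigr => k _ do rewrite scalerA.
rewrite (sum_square_diag (g := fun i k =>
  (binz F m i * ((-1) ^+ i * binz F (m + n - i%:Z) k)) *: X (i + k)%N)); last first.
  by move=> i k /X0 ->; rewrite scaler0.
apply: eq_bigr => j _; rewrite -(binz_alt_vandermonde F_char0 m n j) scaler_suml.
by apply: eq_bigr => i _; rewrite subnKC -1?ltnS // mulrCA mulrA.
Qed.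

End SkewTerm.
(* Exchanging the two products in a Jacobi right-hand side costs the sign -s,
   for a sign s (s^2 = 1). *)
Lemma scale_swap (F : fieldType) (W : lmodType F) (c s : F) (a b : W) :
  s * s = 1 -> c *: (a - s *: b) = (- s) *: (c *: (b - s *: a)).
Proof.
move=> ss1; rewrite scalerA mulrC -scalerA; congr (_ *: _).
by rewrite scalerBr scalerA mulNr ss1 scaleN1r opprK scaleNr addrC.
Qed.

(* Regrouping the three contributions to the M3-component of a Jacobi
   right-hand side for M2 (+) M3. *)
Lemma scale_regroup (F : fieldType) (W : lmodType F) (c s : F) (P Q R S T U : W) :
  c *: ((P + Q + R) - s *: ((S + T) + U)) =
  c *: (P - s *: S) + c *: (Q - s *: U) + c *: (R - s *: T).
Proof.
rewrite -!scalerDr; congr (_ *: _); rewrite !scalerDr !opprD.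
by rewrite (addrACA P _ Q) (addrACA (P + Q) _ R) (addrAC (- _) (- _)).
Qed.

Section SumModes.
Variables (F : fieldType) (V M M2 M3 : lmodType F).
Variables (Y2 : V -> int -> M2 -> M2) (Y3 : V -> int -> M3 -> M3).
Variable (I : M -> int -> M2 -> M3).

Lemma Ysum_bilinear : bilinear_modes Y2 -> bilinear_modes Y3 -> bilinear_modes I ->
  bilinear_modes (Ysum Y2 Y3 I).
Proof.
move=> [Y2D1 Y2D2] [Y3D1 Y3D2] [ID1 ID2]; split=> a u *;
  by rewrite /Ysum [RHS]surjective_pairing /= ?(Y2D1, Y3D1, ID1, Y2D2, Y3D2, ID2)
     scalerDr addrACA.
Qed.

Lemma Ysum_truncation : truncation Y2 -> truncation Y3 -> truncation I ->
  truncation (Ysum Y2 Y3 I).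
Proof.
move=> Y2tr Y3tr Itr [v m] [w2 w3].
have [N2 Y2N] := Y2tr v w2; have [N3 Y3N] := Y3tr v w3; have [NI IN] := Itr m w2.
exists (Num.max N2 (Num.max N3 NI)) => p; rewrite !ge_max => /and3P[*].
by rewrite /Ysum /= Y2N ?Y3N ?IN ?addr0.
Qed.

Lemma Ysum_vacuum (one : V) : bilinear_modes I ->
  (forall n w, Y2 one n w = if n == -1 then w else 0) ->
  (forall n w, Y3 one n w = if n == -1 then w else 0) ->
  forall n w, Ysum Y2 Y3 I (one, 0) n w = if n == -1 then w else 0.
Proof.
move=> Ibil Y2one Y3one n [w2 w3].
by rewrite /Ysum /= Y2one Y3one modes01 // addr0; case: (n == -1).
Qed.

End SumModes.

Section SumJacobi.
Variables (F : fieldType) (V M M2 M3 : lmodType F).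
Hypothesis F_char0 : [pchar F] =i pred0.
Variables (YV : V -> int -> V -> V) (YM : V -> int -> M -> M) (d : {linear M -> M}).
Variables (Y2 : V -> int -> M2 -> M2) (Y3 : V -> int -> M3 -> M3).
Variable (I : M -> int -> M2 -> M3).
Hypotheses (YVtr : truncation YV) (YMtr : truncation YM).
Hypothesis Ybar_tr : truncation (Ybar YV YM d).
Hypotheses (Y2bil : bilinear_modes Y2) (Y2tr : truncation Y2).
Hypothesis Y2jac : jacobi YV Y2 Y2 Y2 Y2.
Hypotheses (Y3bil : bilinear_modes Y3) (Y3tr : truncation Y3).
Hypothesis Y3jac : jacobi YV Y3 Y3 Y3 Y3.
Hypotheses (Ibil : bilinear_modes I) (Itr : truncation I).
Hypotheses (Ijac : jacobi YM I Y3 I Y2) (Id : intertwining_d I d).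

Let Ysbil := Ysum_bilinear Y2bil Y3bil Ibil.
Let Ystr := Ysum_truncation Y2tr Y3tr Itr.

Lemma Ysum_jacobi :
  jacobi (Ybar YV YM d) (Ysum Y2 Y3 I) (Ysum Y2 Y3 I) (Ysum Y2 Y3 I) (Ysum Y2 Y3 I).
Proof.
apply/jacobiP => -[v1 m1] [v2 m2] [w2 w3] m n r.
rewrite (fsum_pair (jacobi_lhs_supp _ _ _ _ _ _ Ybar_tr Ysbil)).
rewrite (fsum_pair (jacobi_rhs_supp _ _ _ _ _ _ Ystr Ystr Ysbil Ysbil)).
congr pair; first exact: Y2jac v1 v2 w2 m n r.
have YM_supp := truncation_from YMtr v2 m1 r.
rewrite (eq_fsum (g := fun i => jacobi_lhs YV Y3 v1 v2 w3 m n r i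
    + jacobi_lhs YM I v1 m2 w2 m n r i
    + skew_term I d (fun p => YM v2 p m1) w2 m n r i)); last first.
  by move=> i; rewrite /jacobi_lhs /= modesD1 // !scalerDr addrA.
rewrite [RHS](eq_fsum (g := fun i => jacobi_rhs Y3 Y3 Y3 v1 v2 w3 m n r i
    + jacobi_rhs Y3 I Y2 v1 m2 w2 m n r i
    + (-1) ^ (r + 1) *: jacobi_rhs Y3 I Y2 v2 m1 w2 n m r i)); last first.
  move=> i; rewrite /jacobi_rhs /= !modesD2 // scale_regroup signzS.
  by rewrite [in X in _ + X]scale_swap // signz_sq.
have lhs3 := jacobi_lhs_supp v1 v2 w3 m n r YVtr Y3bil.
have lhsI := jacobi_lhs_supp v1 m2 w2 m n r YMtr Ibil.
have lhsS : fin_support (skew_term I d (fun p => YM v2 p m1) w2 m n r).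
  exact: skew_term_supp.
have rhs3 := jacobi_rhs_supp v1 v2 w3 m n r Y3tr Y3tr Y3bil Y3bil.
have rhsI := jacobi_rhs_supp v1 m2 w2 m n r Itr Y2tr Y3bil Ibil.
have rhsS := jacobi_rhs_supp v2 m1 w2 n m r Itr Y2tr Y3bil Ibil.
have rhsSZ := fin_supportZ ((-1) ^ (r + 1)) rhsS.
have lhs3I := fin_supportD lhs3 lhsI; have rhs3I := fin_supportD rhs3 rhsI.
move: Y3jac Ijac => /jacobiP Y3jacE /jacobiP IjacE.
rewrite !fsumD // Y3jacE IjacE skew_sum // fsumZ //.
by rewrite IjacE.
Qed.

End SumJacobi.

Unset Implicit Arguments. Set Strict Implicit.
Theorem lemma2 (F : fieldType) (hF : [pchar F] =i pred0)
  (V M M2 M3 : lmodType F)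
  (YV : V -> int -> V -> V) (one : V)
  (YM : V -> int -> M -> M) (d : {linear M -> M})
  (Y2 : V -> int -> M2 -> M2) (Y3 : V -> int -> M3 -> M3)
  (I : M -> int -> M2 -> M3) :
  is_vertex_algebra YV one ->
  is_module YV one YM ->
  d_compatible YM d ->
  is_vertex_algebra (Ybar YV YM d) (one, 0) ->
  is_module YV one Y2 ->
  is_module YV one Y3 ->
  is_intertwining YM Y2 Y3 I ->
  intertwining_d I d ->
  is_module (Ybar YV YM d) (one, 0) (Ysum Y2 Y3 I).
Proof.
move=> [_ [YVtr _]] [_ YMtr _ _] _ [_ [Ybar_tr _]].
move=> [Y2bil Y2tr Y2one Y2jac] [Y3bil Y3tr Y3one Y3jac] [Ibil Itr Ijac] Id.
split.
- exact: Ysum_bilinear.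
- exact: Ysum_truncation.
- exact: Ysum_vacuum.
- exact: Ysum_jacobi.
Qed.
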